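(* Let $F$ be a semi-safe sentence that contains no object constants. Then $\mathrm{SM}[F]$ entails $\forall\mathbf x\,\neg p_i(\mathbf x)$ for every predicate constant $p_i$ of arity $>0$ occurring in $F$ (where $\mathbf x$ is a list of distinct variables of the arity of $p_i$).
   Context: Formulas are first-order formulas over a signature with object constants, predicate constants and equality, but no function constants of arity $>0$. The primitive connectives are $\bot,\land,\lor,\rightarrow$ and the quantifiers $\forall,\exists$; $\neg F$ abbreviates $F\rightarrow\bot$, $\top$ abbreviates $\bot\rightarrow\bot$, and $F\leftrightarrow G$ abbreviates $(F\rightarrow G)\land(G\rightarrow F)$. A sentence is a formula without free variables. Stable model operator: for a sentence $F$, let $\mathbf p=p_1,\dots,p_n$ be all predicate constants occurring in $F$ and $\mathbf u=u_1,\dots,u_n$ distinct predicate variables with matching arities. $\mathbf u\le\mathbf p$ is $\bigwedge_i\forall\mathbf x(u_i(\mathbf x)\rightarrow p_i(\mathbf x))$, $\mathbf u=\mathbf p$ is $\bigwedge_i\forall\mathbf x(u_i(\mathbf x)\leftrightarrow p_i(\mathbf x))$, and $\mathbf u<\mathbf p$ is $(\mathbf u\le\mathbf p)\land\neg(\mathbf u=\mathbf p)$. $F^*(\mathbf u)$ is defined recursively: $p_i(\mathbf t)^*=u_i(\mathbf t)$; $(t_1=t_2)^*=(t_1=t_2)$; $\bot^*=\bot$; $(G\land H)^*=G^*\land H^*$; $(G\lor H)^*=G^*\lor H^*$; $(G\rightarrow H)^*=(G^*\rightarrow H^* )\land(G\rightarrow H)$; $(\forall xG)^*=\forall xG^*$;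 $(\exists xG)^*=\exists xG^*$. Then $\mathrm{SM}[F]$ is the second-order sentence $F\land\neg\exists\mathbf u((\mathbf u<\mathbf p)\land F^*(\mathbf u))$. Restricted variables: for a quantifier-free formula $F$, $\mathrm{RV}(F)$ is defined by: if $F$ is an equality between two variables, $\mathrm{RV}(F)=\emptyset$; if $F$ is any other atomic formula, $\mathrm{RV}(F)$ is the set of variables occurring in $F$; $\mathrm{RV}(\bot)=\emptyset$; $\mathrm{RV}(G\land H)=\mathrm{RV}(G)\cup\mathrm{RV}(H)$; $\mathrm{RV}(G\lor H)=\mathrm{RV}(G)\cap\mathrm{RV}(H)$; $\mathrm{RV}(G\rightarrow H)=\emptyset$. An occurrence of a subformula or variable is strictly positive if it is not in the antecedent of any implication. A sentence in prenex form $Q_1x_1\cdots Q_nx_nM$ ($M$ quantifier-free, $x_i$ distinct) is semi-safe if every strictly positive occurrence of every variable $x_i$ in $M$ belongs to a subformula $G\rightarrow H$ of $M$ with $x_i\in\mathrm{RV}(G)$. *)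

From Stdlib Require Import List PeanoNat Bool.
Import ListNotations.

Definition psym := (nat * nat)%type.
Definition arity (p : psym) : nat := snd p.

Inductive term := Var (x : nat) | Cst (c : nat).

(** First-order formulas use [S := psym]; the formula F*(u) uses
    [S := psym + psym], where [inl p] is the predicate constant p and
    [inr p] is the predicate variable u_p associated with p. *)
Inductive form (S : Type) : Type :=
| Atom (s : S) (ts : list term)
| Eqf (t1 t2 : term)
| Bot
| And (F G : form S)
| Or (F G : form S)
| Imp (F G : form S)
| All (x : nat) (F : form S)
| Ex (x : nat) (F : form S).
Arguments Atom {S}. Arguments Eqf {S}. Arguments Bot {S}.
Arguments And {S}. Arguments Or {S}. Arguments Imp {S}.
Arguments All {S}. Arguments Ex {S}.

Definition Neg {S} (F : form S) : form S := Imp F Bot.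

Definition forall_list {S} (xs : list nat) (F : form S) : form S :=
  fold_right All F xs.

Definition term_vars (t : term) : list nat :=
  match t with Var x => [x] | Cst _ => [] end.

Fixpoint fv {S} (F : form S) : list nat :=
  match F with
  | Atom _ ts => flat_map term_vars ts
  | Eqf t1 t2 => term_vars t1 ++ term_vars t2
  | Bot => []
  | And G H | Or G H | Imp G H => fv G ++ fv H
  | All x G | Ex x G => remove Nat.eq_dec x (fv G)
  end.

Definition sentence {S} (F : form S) : Prop := fv F = [].

Definition term_is_const (t : term) : bool :=
  match t with Cst _ => true | Var _ => false end.

Fixpoint no_obj_consts {S} (F : form S) : Prop :=
  match F with
  | Atom _ ts => forall t, In t ts -> term_is_const t = false
  | Eqf t1 t2 => term_is_const t1 = false /\ term_is_const t2 = false
  | Bot => True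
  | And G H | Or G H | Imp G H => no_obj_consts G /\ no_obj_consts H
  | All _ G | Ex _ G => no_obj_consts G
  end.

Fixpoint preds (F : form psym) : list psym :=
  match F with
  | Atom p _ => [p]
  | Eqf _ _ | Bot => []
  | And G H | Or G H | Imp G H => preds G ++ preds H
  | All _ G | Ex _ G => preds G
  end.

Fixpoint wf (F : form psym) : Prop :=
  match F with
  | Atom p ts => length ts = arity p
  | Eqf _ _ | Bot => True
  | And G H | Or G H | Imp G H => wf G /\ wf H
  | All _ G | Ex _ G => wf G
  end.

Fixpoint fmap {S T} (f : S -> T) (F : form S) : form T :=
  match F with
  | Atom s ts => Atom (f s) ts
  | Eqf t1 t2 => Eqf t1 t2
  | Bot => Bot
  | And G H => And (fmap f G) (fmap f H)
  | Or G H => Or (fmap f G) (fmap f H)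
  | Imp G H => Imp (fmap f G) (fmap f H)
  | All x G => All x (fmap f G)
  | Ex x G => Ex x (fmap f G)
  end.

Fixpoint star (F : form psym) : form (psym + psym) :=
  match F with
  | Atom p ts => Atom (inr p) ts
  | Eqf t1 t2 => Eqf t1 t2
  | Bot => Bot
  | And G H => And (star G) (star H)
  | Or G H => Or (star G) (star H)
  | Imp G H => And (Imp (star G) (star H)) (Imp (fmap inl G) (fmap inl H))
  | All x G => All x (star G)
  | Ex x G => Ex x (star G)
  end.

Definition upd {D} (rho : nat -> D) (x : nat) (d : D) : nat -> D :=
  fun y => if Nat.eqb y x then d else rho y.

Definition tval {D} (c : nat -> D) (rho : nat -> D) (t : term) : D :=
  match t with Var x => rho x | Cst k => c k end.

Fixpoint sat {S D} (c : nat -> D) (P : S -> list D -> Prop)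
  (rho : nat -> D) (F : form S) : Prop :=
  match F with
  | Atom s ts => P s (map (tval c rho) ts)
  | Eqf t1 t2 => tval c rho t1 = tval c rho t2
  | Bot => False
  | And G H => sat c P rho G /\ sat c P rho H
  | Or G H => sat c P rho G \/ sat c P rho H
  | Imp G H => sat c P rho G -> sat c P rho H
  | All x G => forall d, sat c P (upd rho x d) G
  | Ex x G => exists d, sat c P (upd rho x d) G
  end.

Definition le_on {D} (ps : list psym) (U P : psym -> list D -> Prop) : Prop :=
  forall p, In p ps -> forall xs, length xs = arity p -> U p xs -> P p xs.
Definition eq_on {D} (ps : list psym) (U P : psym -> list D -> Prop) : Prop :=
  forall p, In p ps -> forall xs, length xs = arity p -> (U p xs <-> P p xs).
Definition lt_on {D} (ps : list psym) (U P : psym -> list D -> Prop) : Prop :=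
  le_on ps U P /\ ~ eq_on ps U P.

Definition sum_interp {D} (P U : psym -> list D -> Prop) :
  psym + psym -> list D -> Prop :=
  fun s => match s with inl p => P p | inr p => U p end.

Definition sat_SM {D} (c : nat -> D) (P : psym -> list D -> Prop)
  (rho : nat -> D) (F : form psym) : Prop :=
  sat c P rho F /\
  ~ (exists U : psym -> list D -> Prop,
        lt_on (preds F) U P /\ sat c (sum_interp P U) rho (star F)).

Definition SM_entails (F G : form psym) : Prop :=
  forall (D : Type), inhabited D ->
  forall (c : nat -> D) (P : psym -> list D -> Prop) (rho : nat -> D),
    sat_SM c P rho F -> sat c P rho G.

Definition is_var (t : term) : bool :=
  match t with Var _ => true | Cst _ => false end.

Fixpoint inRV (x : nat) (F : form psym) : Prop :=
  match F with
  | Atom _ ts => In x (flat_map term_vars ts)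
  | Eqf t1 t2 =>
      if andb (is_var t1) (is_var t2) then False
      else In x (term_vars t1 ++ term_vars t2)
  | Bot => False
  | And G H => inRV x G \/ inRV x H
  | Or G H => inRV x G /\ inRV x H
  | Imp _ _ => False
  | All _ _ | Ex _ _ => False  (* not used: RV is only for quantifier-free formulas *)
  end.

Fixpoint qfree {S} (F : form S) : Prop :=
  match F with
  | Atom _ _ | Eqf _ _ | Bot => True
  | And G H | Or G H | Imp G H => qfree G /\ qfree H
  | All _ _ | Ex _ _ => False
  end.

(** [covered x M]: every strictly positive occurrence of x in M belongs to a
    subformula G -> H of M with x in RV(G). *)
Fixpoint covered (x : nat) (M : form psym) : Prop :=
  match M with
  | Atom _ ts => ~ In x (flat_map term_vars ts)
  | Eqf t1 t2 => ~ In x (term_vars t1 ++ term_vars t2)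
  | Bot => True
  | And G H | Or G H => covered x G /\ covered x H
  | Imp G H => inRV x G \/ covered x H
  | All _ G | Ex _ G => covered x G
  end.

Definition prenex (qs : list (bool * nat)) (M : form psym) : form psym :=
  fold_right (fun (q : bool * nat) (G : form psym) => if fst q then All (snd q) G else Ex (snd q) G) M qs.

Definition semi_safe (F : form psym) : Prop :=
  sentence F /\
  exists (qs : list (bool * nat)) (M : form psym),
    F = prenex qs M /\ qfree M /\ NoDup (map snd qs) /\
    forall x, In x (map snd qs) -> covered x M.

(* Let U be the nullary part of an interpretation P: it agrees with P on
   0-ary tuples and is empty on all others, so U <= P, and U < P as soon as
   some predicate of positive arity is nonempty.  Without object constants,
   every atom mentioning a variable is false under U, and an equality only
   restricts variables if it involves a constant; so G*(U) is false whenever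
   RV(G) is nonempty.  Semi-safety says that every variable is covered, and
   by induction F implies F*(U): at an implication G -> H, either G*(U) is
   false, or every variable is covered in H and G*(U) implies G (as U <= P),
   hence H, hence H*(U).  Minimality of P then forbids U < P. *)

From Stdlib Require Import List Lia PeanoNat.
Import ListNotations.

Definition nullary_part {D} (P : psym -> list D -> Prop) : psym -> list D -> Prop :=
  fun q l => l = [] /\ P q l.

Lemma sat_fmap_inl {D} (c : nat -> D) P U G rho :
  sat c (sum_interp P U) rho (fmap inl G) <-> sat c P rho G.
Proof. revert rho; induction G; intros; simpl; firstorder. Qed.

Lemma sat_star_le {D} (c : nat -> D) P U :
  (forall s l, U s l -> P s l) ->
  forall G rho, sat c (sum_interp P U) rho (star G) -> sat c P rho G.
Proof.
  intros HUP G; induction G; simpl; intros rho H.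
  - exact (HUP _ _ H).
  - exact H.
  - exact H.
  - firstorder.
  - firstorder.
  - intros HG; apply (sat_fmap_inl c P U), (proj2 H), sat_fmap_inl, HG.
  - intros d; apply IHG, H.
  - destruct H as [d Hd]; exists d; apply IHG, Hd.
Qed.

Lemma sat_star_inRV_false {D} (c : nat -> D) P U :
  (forall s l, U s l -> l = []) ->
  forall G x rho, no_obj_consts G -> inRV x G ->
  ~ sat c (sum_interp P U) rho (star G).
Proof.
  intros HU G; induction G; simpl; intros y rho Hno Hin; try contradiction.
  - intros HUs; apply HU in HUs.
    destruct ts; simpl in *; [contradiction | discriminate].
  - destruct Hno; destruct t1, t2; simpl in *; discriminate || contradiction.
  - destruct Hno, Hin; firstorder.
  - destruct Hno, Hin; firstorder.
Qed.

Lemma covered_atom_nil s ts :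
  no_obj_consts (Atom s ts) -> (forall y, covered y (Atom s ts)) -> ts = [].
Proof.
  simpl; intros Hno Hcov.
  destruct ts as [|[y|k] ts]; [reflexivity | |].
  - exfalso; apply (Hcov y); left; reflexivity.
  - specialize (Hno (Cst k) (or_introl eq_refl)); discriminate.
Qed.

Lemma sat_star_nullary_part {D} (c : nat -> D) P :
  forall G rho, no_obj_consts G -> (forall x, covered x G) ->
  sat c P rho G -> sat c (sum_interp P (nullary_part P)) rho (star G).
Proof.
  intros G; induction G as [s ts| | |G IHG H IHH|G IHG H IHH|G IHG H IHH|z G IHG|z G IHG];
    simpl; intros rho Hno Hcov Hsat.
  - rewrite (covered_atom_nil s ts Hno Hcov) in *; split; auto.
  - exact Hsat.
  - exact Hsat.
  - destruct Hno, Hsat; split; [apply IHG | apply IHH]; firstorder.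
  - destruct Hno, Hsat; [left; apply IHG | right; apply IHH]; firstorder.
  - destruct Hno as [HnoG HnoH]; split.
    + intros HG; apply IHH; auto.
      * intros x; destruct (Hcov x) as [HRV|Hc]; [|exact Hc].
        exfalso; exact (sat_star_inRV_false c P _ (fun _ _ Hl => proj1 Hl) G x rho HnoG HRV HG).
      * apply Hsat; eapply sat_star_le; [|exact HG]; intros ? ? []; assumption.
    + intros HG; apply sat_fmap_inl, Hsat, (sat_fmap_inl c P (nullary_part P)), HG.
  - intros d; apply IHG; auto.
  - destruct Hsat as [d Hd]; exists d; apply IHG; auto.
Qed.

Lemma covered_not_free x M : qfree M -> ~ In x (fv M) -> covered x M.
Proof.
  induction M; simpl; intros Hq Hx; try contradiction; rewrite ?in_app_iff in Hx.
  - exact Hx.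
  - rewrite in_app_iff; exact Hx.
  - exact I.
  - destruct Hq; split; auto.
  - destruct Hq; split; auto.
  - destruct Hq; right; auto.
Qed.

Lemma covered_prenex x qs M : covered x (prenex qs M) <-> covered x M.
Proof. induction qs as [|[[] y] qs IH]; simpl; tauto. Qed.

Lemma in_fv_prenex x qs M :
  In x (fv M) -> In x (map snd qs) \/ In x (fv (prenex qs M)).
Proof.
  induction qs as [|[b y] qs IH]; simpl; intros Hx; [now right|].
  destruct (Nat.eq_dec x y) as [->|Hne]; [now left; left|].
  destruct (IH Hx) as [H|H]; [now left; right|].
  right; destruct b; simpl; now apply in_in_remove.
Qed.

Lemma semi_safe_covered F : semi_safe F -> forall x, covered x F.
Proof.
  intros [Hsent [qs [M [-> [Hq [_ Hcov]]]]]] x.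
  apply covered_prenex.
  destruct (in_dec Nat.eq_dec x (fv M)) as [Hx|Hx]; [|now apply covered_not_free].
  destruct (in_fv_prenex x qs M Hx) as [H|H]; [now apply Hcov|].
  unfold sentence in Hsent; rewrite Hsent in H; contradiction.
Qed.

Lemma lt_on_nullary_part {D} ps (P : psym -> list D -> Prop) p ds :
  In p ps -> P p ds -> length ds = arity p -> 0 < length ds ->
  lt_on ps (nullary_part P) P.
Proof.
  intros Hp HP Hlen Hpos; split.
  - intros q _ l _ []; assumption.
  - intros Heq; destruct (proj2 (Heq p Hp ds Hlen) HP) as [Hnil _].
    rewrite Hnil in Hpos; simpl in Hpos; lia.
Qed.

Lemma sat_forall_list {S D} (c : nat -> D) (P : S -> list D -> Prop) xs G rho :
  (forall rho', sat c P rho' G) -> sat c P rho (forall_list xs G).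
Proof. revert rho; induction xs; simpl; auto. Qed.

Theorem corollary1 :
  forall F : form psym,
    wf F -> semi_safe F -> no_obj_consts F ->
    forall p : psym, In p (preds F) -> 0 < arity p ->
    forall xs : list nat, NoDup xs -> length xs = arity p ->
      SM_entails F (forall_list xs (Neg (Atom p (map Var xs)))).
Proof.
  intros F _ Hsafe Hno p Hp Har xs _ Hlen D _ c P rho [Hsat Hmin].
  apply sat_forall_list; intros rho' HPxs; simpl in HPxs.
  apply Hmin; exists (nullary_part P); split.
  - apply (lt_on_nullary_part _ P p _ Hp HPxs); rewrite !length_map; lia.
  - apply sat_star_nullary_part; auto.
    now apply semi_safe_covered.
Qed.
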